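(* Let $J\subset I$, $w\in W^J$ and $u\in W$ with $l(uw)=l(u)+l(w)$. Write $uw=xv$ with $x\in W^J$ and $v\in W_J$. Then for any $v'\in W$ with $v'\le v$ there exists $u'\in W$ with $u'\le u$ such that $u'w=xv'$.
   Context: $W$ is the Weyl group of a semisimple group with simple reflections $s_i$, $i\in I$, length $l$ and Bruhat order $\le$. For $J\subset I$, $W_J$ is the subgroup generated by $\{s_j:j\in J\}$ and $W^J$ the set of minimal length representatives of $W/W_J$. *)

From mathcomp Require Import all_boot all_order all_fingroup.
Set Implicit Arguments. Unset Strict Implicit. Unset Printing Implicit Defensive.
Local Open Scope group_scope.

Section Coxeter.
Variables (gT : finGroupType) (I : finType) (s : I -> gT).

Definition word_eval (t : seq I) : gT := \prod_(i <- t) s i.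

Definition cox_m (i j : I) : nat := #[s i * s j].
Definition cox_rel (i j : I) : seq I :=
  mkseq (fun k => if odd k then j else i) (2 * cox_m i j).

Definition cox_step (a b : seq I) : Prop :=
  exists p q i j, a = p ++ cox_rel i j ++ q /\ b = p ++ q.

Inductive cox_equiv : seq I -> seq I -> Prop :=
| cox_equiv_refl a : cox_equiv a a
| cox_equiv_step a b : cox_step a b -> cox_equiv a b
| cox_equiv_sym a b : cox_equiv a b -> cox_equiv b a
| cox_equiv_trans a b c : cox_equiv a b -> cox_equiv b c -> cox_equiv a c.

(* (W, {s_i}) is a Coxeter system: W generated by distinct involutions s_i,
   and W has the presentation < s_i | (s_i s_j)^m(i,j) = 1 >, i.e. two words
   have the same value iff they are equal modulo the relators. *)
Definition coxeter_system : Prop :=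
  [/\ <<[set s i | i in I]>> = [set: gT],
      injective s,
      (forall i, s i != 1 /\ s i ^+ 2 = 1) &
      (forall a b : seq I, word_eval a = word_eval b -> cox_equiv a b)].

(* crystallographic condition: m(i,j) in {2,3,4,6} for i <> j.  Finite
   Coxeter groups satisfying it are exactly the Weyl groups of (reduced)
   root systems, i.e. of semisimple groups. *)
Definition crystallographic : Prop :=
  forall i j, i != j -> cox_m i j \in [:: 2; 3; 4; 6]%N.

(* length l(w): least n such that w is a product of n generators
   (searched among n < #|W|, which suffices when W is generated by the s_i). *)
Definition cox_len (w : gT) : nat :=
  find (fun n => [exists t : n.-tuple I, word_eval t == w]) (iota 0 #|gT|).

Definition reflections : {set gT} := \bigcup_(i : I) (s i ^: [set: gT]).

Inductive bruhat : gT -> gT -> Prop :=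
| bruhat_refl x : bruhat x x
| bruhat_step x y t : bruhat x y -> t \in reflections ->
    (cox_len y < cox_len (y * t))%N -> bruhat x (y * t).

Definition parabolic (J : {set I}) : {set gT} := <<[set s j | j in J]>>.

Definition min_reps (J : {set I}) : {set gT} :=
  [set w | [forall v in parabolic J, (cox_len w <= cox_len (w * v))%N]].

End Coxeter.

(* Write u = s_i u1 with l(u1) = l(u) - 1 and u1 w = x1 v1 with x1 in W^J and
   v1 in W_J; by induction the statement holds for u1.  By Deodhar's lemma
   either s_i x1 is in W^J, and then x = s_i x1 and v = v1, or s_i x1 = x1 s_k
   with s_k in W_J, and then x = x1 and v = s_k v1 > v1.  In both cases the
   lifting property of the Bruhat order (if x <= y < s y then s x <= s y; if
   v' <= v and s v < v then v' <= s v or s v' <= s v) turns the u1' given by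
   induction into u' = u1' or u' = s_i u1'.
   Lengths are controlled by the exchange condition l(t g) < l(g) <-> eta(g, t)
   for reflections t, where eta(g, t) is the parity of the number of
   occurrences of t in the reflection sequence of any word for g; that this
   parity is well defined is where the Coxeter presentation is used. *)

From mathcomp Require Import all_boot all_order all_fingroup zify.
Set Implicit Arguments. Unset Strict Implicit. Unset Printing Implicit Defensive.
Local Open Scope group_scope.

(* The same length may occur under different but convertible group-structure
   instances, which [lia] would take for distinct atoms. *)
Ltac len_lia :=
  repeat match goal with H : context [cox_len _ _] |- _ => revert H end;
  repeat match goal with |- context [cox_len ?s ?g] =>
    let n := fresh "n" in set n := cox_len s g; clearbody n end;
  intros; lia.

Lemma mkseq_cons (T : Type) (f : nat -> T) n :
  mkseq f n.+1 = f 0%N :: mkseq (f \o succn) n.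
Proof. by rewrite /mkseq /= -[1%N]addn0 iotaDl -map_comp. Qed.

Section CoxeterSystem.
Variables (gT : finGroupType) (I : finType) (s : I -> gT).

Local Notation ev := (word_eval s).
Local Notation len := (cox_len s).

Lemma word_eval_nil : ev [::] = 1.
Proof. by rewrite /word_eval big_nil. Qed.

Lemma word_eval_cons i a : ev (i :: a) = s i * ev a.
Proof. by rewrite /word_eval big_cons. Qed.

Lemma word_eval_cat a b : ev (a ++ b) = ev a * ev b.
Proof. by rewrite /word_eval big_cat. Qed.

Lemma word_eval1 i : ev [:: i] = s i.
Proof. by rewrite word_eval_cons word_eval_nil mulg1. Qed.

Lemma word_eval_rcons a i : ev (rcons a i) = ev a * s i.
Proof. by rewrite -cats1 word_eval_cat word_eval1. Qed.

Lemma mem_gen_word (K : {pred I}) g :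
  g \in <<[set s i | i in K]>> -> exists2 a, all (mem K) a & ev a = g.
Proof.
case/gen_prodgP => n [c Kc ->]; elim: n c Kc => [|n IHn] c Kc.
  by exists [::]; rewrite ?big_ord0 ?word_eval_nil.
have [a Ka eva] := IHn (fun k => c (widen_ord (leqnSn n) k)) (fun k => Kc _).
have /imsetP [j Kj cj] := Kc ord_max.
exists (rcons a j); first by rewrite all_rcons Ka andbT.
by rewrite word_eval_rcons big_ord_recr eva cj.
Qed.

Lemma word_shorten a :
  (#|gT| <= size a)%N -> exists2 b, ev b = ev a & (size b < size a)%N.
Proof.
move=> le_G_a; pose prefix (k : 'I_(size a).+1) := ev (take k a).
have /injectivePn [i [j neq_ij eq_ij]] : ~~ injectiveb prefix.
  by apply/injectiveP => /leq_card; rewrite card_ord ltnNge le_G_a.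
wlog lt_ij : i j neq_ij eq_ij / (i < j)%N.
  move=> gen; case: (ltngtP i j) => [|lt_ji|/val_inj eq_ij']; first exact: gen.
    by apply: (gen j i); rewrite 1?eq_sym.
  by rewrite eq_ij' eqxx in neq_ij.
exists (take i a ++ drop j a).
  by rewrite word_eval_cat -/(prefix i) eq_ij -word_eval_cat cat_take_drop.
have := ltn_ord j; rewrite size_cat size_take size_drop; case: ifP; lia.
Qed.

Lemma cox_len_word a : (len (ev a) <= size a)%N.
Proof.
rewrite /cox_len; have [lt_a_G | le_G_a] := ltnP (size a) #|gT|.
  rewrite leqNgt; apply/negP => /(before_find 0).
  by rewrite nth_iota // add0n => /existsP; apply; exists (in_tuple a).
by apply: leq_trans (find_size _ _) _; rewrite size_iota.
Qed.

Hypothesis gen_s : <<[set s i | i in I]>> = [set: gT].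

Lemma word_exists g : exists a, ev a == g.
Proof.
have /mem_gen_word [a _ <-] : g \in <<[set s i | i in I]>> by rewrite gen_s inE.
by exists a.
Qed.

Lemma short_word g : exists2 a, ev a = g & (size a < #|gT|)%N.
Proof.
have ex_size : exists n, [exists a : n.-tuple I, ev a == g].
  by have [a /eqP <-] := word_exists g; exists (size a); apply/existsP; exists (in_tuple a).
case: (ex_minnP ex_size) => n /existsP [a /eqP eva] min_n.
exists a => //; rewrite ltnNge; apply/negP => /word_shorten [b evb].
rewrite size_tuple ltnNge => /negP; apply; apply: min_n.
by apply/existsP; exists (in_tuple b); rewrite evb eva.
Qed.

Lemma cox_lenP g : exists2 a, ev a = g & size a = len g.
Proof.
pose has_word n := [exists a : n.-tuple I, ev a == g].
have has_short : has has_word (iota 0 #|gT|).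
  have [a eva lt_a_G] := short_word g.
  apply/hasP; exists (size a); first by rewrite mem_iota.
  by apply/existsP; exists (in_tuple a); rewrite eva.
have := nth_find 0 has_short; rewrite has_find size_iota in has_short.
by rewrite nth_iota // add0n => /existsP [a /eqP eva]; exists a; rewrite ?size_tuple.
Qed.

Lemma cox_len_mul x y : (len (x * y) <= len x + len y)%N.
Proof.
have [a <- <-] := cox_lenP x; have [b <- <-] := cox_lenP y.
by rewrite -word_eval_cat -size_cat cox_len_word.
Qed.

Lemma cox_len1 : len 1 = 0%N.
Proof. by apply/eqP; rewrite -leqn0 -word_eval_nil cox_len_word. Qed.

Lemma cox_len_gen i : (len (s i) <= 1)%N.
Proof. by rewrite -word_eval1 cox_len_word. Qed.

Lemma cox_len_eq0 g : len g = 0%N -> g = 1.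
Proof. by have [[|i a] <- <-] := cox_lenP g; rewrite ?word_eval_nil. Qed.

Lemma cox_len_eq1 g : len g = 1%N -> exists i, g = s i.
Proof. by have [[|i [|j a]] <- <-] := cox_lenP g => // _; exists i; rewrite word_eval1. Qed.

Lemma cox_len_lmul_gen_le i g : (len (s i * g) <= (len g).+1)%N.
Proof. by apply: leq_trans (cox_len_mul _ _) _; rewrite -add1n leq_add2r cox_len_gen. Qed.

Hypothesis gen_invol : forall i, s i * s i = 1.

Lemma invg_gen i : (s i)^-1 = s i.
Proof. by apply: (mulgI (s i)); rewrite mulgV gen_invol. Qed.

Lemma gen_mulK i g : s i * (s i * g) = g.
Proof. by rewrite mulgA gen_invol mul1g. Qed.

Lemma cox_len_left_descent u n : len u = n.+1 -> exists i, len (s i * u) = n.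
Proof.
move=> len_u; have [[|i a] eva size_a] := cox_lenP u; first by rewrite -size_a in len_u.
exists i; rewrite -eva word_eval_cons gen_mulK /= in size_a len_u *.
by have := cox_len_word a; have := cox_len_lmul_gen_le i (ev a); len_lia.
Qed.

Lemma word_eval_rev a : ev (rev a) = (ev a)^-1.
Proof.
elim: a => [|i a IHa]; first by rewrite word_eval_nil invg1.
by rewrite rev_cons word_eval_rcons IHa word_eval_cons invMg invg_gen.
Qed.

Lemma cox_len_invg g : len g^-1 = len g.
Proof.
suff le_len_inv h : (len h^-1 <= len h)%N.
  by apply/eqP; rewrite eqn_leq le_len_inv -{1}(invgK g) le_len_inv.
by have [a <- <-] := cox_lenP h; rewrite -word_eval_rev -(size_rev a) cox_len_word.
Qed.

(* The k-th entry is s_{i_1} ... s_{i_{k-1}} s_{i_k} s_{i_{k-1}} ... s_{i_1};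
   multiplying [ev a] on the left by it deletes the k-th letter of [a]. *)
Fixpoint refl_seq (a : seq I) : seq gT :=
  if a is i :: b then s i :: [seq t ^ (s i)^-1 | t <- refl_seq b] else [::].

Lemma refl_seq_cat a b :
  refl_seq (a ++ b) = refl_seq a ++ [seq t ^ (ev a)^-1 | t <- refl_seq b].
Proof.
elim: a => [|i a IHa] /=.
  by rewrite word_eval_nil invg1; under eq_map do rewrite conjg1; rewrite map_id.
rewrite IHa map_cat -map_comp word_eval_cons invMg; congr (_ :: (_ ++ _)).
by apply: eq_map => t /=; rewrite conjgM.
Qed.

Definition alt_word (n : nat) (i j : I) : seq I :=
  mkseq (fun k => if odd k then j else i) n.

Lemma alt_wordS n i j : alt_word n.+1 i j = i :: alt_word n j i.
Proof. by rewrite /alt_word mkseq_cons; congr (_ :: _); apply: eq_mkseq => k /=; case: odd. Qed.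

Lemma word_eval_alt_word k i j : ev (alt_word (2 * k) i j) = (s i * s j) ^+ k.
Proof.
elim: k => [|k IHk]; first by rewrite word_eval_nil.
by rewrite mulnS !alt_wordS !word_eval_cons IHk expgS mulgA.
Qed.

Lemma refl_seq_alt_word n i j :
  refl_seq (alt_word n i j) = mkseq (fun k => (s i * s j) ^+ k * s i) n.
Proof.
elim: n i j => [|n IHn] i j //; rewrite alt_wordS /= IHn mkseq_cons /= mul1g /mkseq -map_comp.
congr (_ :: _); apply: eq_map => k /=.
by rewrite invg_gen conjMg conjXg !conjgE invg_gen -(mulgA (s j)) gen_invol mulg1 expgSr !mulgA.
Qed.

Lemma word_eval_cox_rel i j : ev (cox_rel s i j) = 1.
Proof. by rewrite -[cox_rel s i j]/(alt_word _ i j) word_eval_alt_word expg_order. Qed.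

Lemma refl_seq_cox_rel i j : exists r, refl_seq (cox_rel s i j) = r ++ r.
Proof.
rewrite -[cox_rel s i j]/(alt_word _ i j) mul2n -addnn refl_seq_alt_word /mkseq iotaD.
exists (mkseq (fun k => (s i * s j) ^+ k * s i) (cox_m s i j)); rewrite map_cat add0n.
congr (_ ++ _); rewrite -[X in iota X]addn0 iotaDl -map_comp.
by apply: eq_map => k /=; rewrite expgD expg_order mul1g.
Qed.

Lemma cox_equiv_refl_parity a b t : cox_equiv s a b ->
  odd (count_mem t (refl_seq a)) = odd (count_mem t (refl_seq b)).
Proof.
elim=> {a b} [// | a b [p [q [i [j [-> ->]]]]] | a b _ -> | a b c _ -> _ ->] //.
have [r def_r] := refl_seq_cox_rel i j.
rewrite !refl_seq_cat def_r word_eval_cox_rel invg1.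
have -> : [seq u ^ 1 | u <- refl_seq q] = refl_seq q.
  by rewrite -[RHS]map_id; apply: eq_map => u; rewrite conjg1.
by rewrite !map_cat !count_cat !oddD addbb.
Qed.

Hypothesis presentation : forall a b, ev a = ev b -> cox_equiv s a b.

(* The reflection cocycle eta(g, t).  It does not depend on the chosen word
   for [g]: a relator lists every reflection an even number of times. *)
Definition refl_parity (g t : gT) : bool :=
  odd (count_mem t (refl_seq (xchoose (word_exists g)))).

Lemma refl_parity_word a t : refl_parity (ev a) t = odd (count_mem t (refl_seq a)).
Proof. by apply/cox_equiv_refl_parity/presentation/eqP/(xchooseP (word_exists _)). Qed.

Lemma refl_parityM x y t :
  refl_parity (x * y) t = refl_parity x t (+) refl_parity y (t ^ x).
Proof.
have [a /eqP <-] := word_exists x; have [b /eqP <-] := word_exists y.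
rewrite -word_eval_cat !refl_parity_word refl_seq_cat count_cat oddD count_map.
congr (_ (+) odd _); apply: eq_count => u /=.
by rewrite (can2_eq (conjgKV _) (conjgK _)).
Qed.

Lemma refl_parity_gen i t : refl_parity (s i) t = (t == s i).
Proof. by rewrite -{1}word_eval1 refl_parity_word /= addn0 oddb eq_sym. Qed.

Lemma refl_parity1 t : refl_parity 1 t = false.
Proof. by rewrite -word_eval_nil refl_parity_word. Qed.

Lemma reflectionsP r : reflect (exists i g, r = s i ^ g) (r \in reflections s).
Proof.
apply: (iffP bigcupP) => [[i _ /imsetP [g _ ->]] | [i [g ->]]]; first by exists i, g.
by exists i => //; apply: memJ_class; rewrite inE.
Qed.

Lemma gen_reflection i : s i \in reflections s.
Proof. by apply/reflectionsP; exists i, 1; rewrite conjg1. Qed.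

Lemma reflectionJ r g : r \in reflections s -> r ^ g \in reflections s.
Proof. by case/reflectionsP => i [h ->]; apply/reflectionsP; exists i, (h * g); rewrite conjgM. Qed.

Lemma reflection_invol r : r \in reflections s -> r * r = 1.
Proof. by case/reflectionsP => i [g ->]; rewrite -conjMg gen_invol conj1g. Qed.

Lemma refl_parity_reflection r : r \in reflections s -> refl_parity r r.
Proof.
case/reflectionsP => i [g ->]; set t := s i ^ g.
have t_gV : t ^ g^-1 = s i by rewrite conjgK.
have t_gVs : t ^ (g^-1 * s i) = s i by rewrite conjgM t_gV conjgE mulKg.
have def_t : t = g^-1 * s i * g by rewrite /t conjgE mulgA.
rewrite [X in refl_parity X _]def_t !refl_parityM t_gV t_gVs refl_parity_gen eqxx.
have := refl_parity1 t; rewrite -(mulVg g) refl_parityM t_gV.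
by case: refl_parity; case: refl_parity.
Qed.

Lemma refl_seq_delete a t :
  t \in refl_seq a -> exists2 b, ev b = t * ev a & (size b < size a)%N.
Proof.
elim: a t => [|i a IHa] t //=; rewrite inE => /predU1P [-> | /mapP [u a_u ->]].
  by exists a; rewrite // word_eval_cons gen_mulK.
have [b evb lt_ba] := IHa _ a_u; exists (i :: b) => //.
by rewrite !word_eval_cons evb invg_gen conjgE invg_gen -!mulgA gen_mulK.
Qed.

Lemma cox_len_refl_parity_lt r g : refl_parity g r -> (len (r * g) < len g)%N.
Proof.
have [a <- <-] := cox_lenP g; rewrite refl_parity_word => odd_r.
have /refl_seq_delete [b <- lt_ba] : r \in refl_seq a.
  by rewrite -has_pred1 has_count; case: count odd_r.
exact: leq_ltn_trans (cox_len_word b) lt_ba.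
Qed.

Lemma refl_parity_reflM r g :
  r \in reflections s -> refl_parity (r * g) r = ~~ refl_parity g r.
Proof. by move=> Rr; rewrite refl_parityM refl_parity_reflection // conjgE mulKg. Qed.

Lemma cox_len_reflM_ltE r g :
  r \in reflections s -> (len (r * g) < len g)%N = refl_parity g r.
Proof.
move=> Rr; apply/idP/idP; last exact: cox_len_refl_parity_lt.
apply: contraLR; rewrite -refl_parity_reflM // -leqNgt => /cox_len_refl_parity_lt.
by rewrite mulgA reflection_invol // mul1g => /ltnW.
Qed.

Lemma cox_len_reflM_neq r g : r \in reflections s -> len (r * g) != len g.
Proof.
move=> Rr; rewrite neq_ltn cox_len_reflM_ltE //; case parity_r: refl_parity => //=.
have : refl_parity (r * g) r by rewrite refl_parity_reflM // parity_r.
by move/cox_len_refl_parity_lt; rewrite mulgA reflection_invol // mul1g.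
Qed.

Lemma cox_len_lmul_gen i g :
  len (s i * g) = (len g).+1 \/ len g = (len (s i * g)).+1.
Proof.
have := cox_len_reflM_neq g (gen_reflection i); have := cox_len_lmul_gen_le i g.
have := cox_len_lmul_gen_le i (s i * g); rewrite gen_mulK; len_lia.
Qed.

Lemma cox_len_mulr_gen g i :
  len (g * s i) = (len g).+1 \/ len g = (len (g * s i)).+1.
Proof. by rewrite -cox_len_invg -(cox_len_invg g) invMg invg_gen; apply: cox_len_lmul_gen. Qed.

Local Notation br := (bruhat s).

Lemma bruhat_trans x y z : br x y -> br y z -> br x z.
Proof.
move=> br_xy br_yz; elim: br_yz br_xy => // {}y {}z t _ IH Rt lt_yz /IH br_xy.
exact: bruhat_step br_xy Rt lt_yz.
Qed.

Lemma bruhat_lmul_refl x y r :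
  br x y -> r \in reflections s -> (len y < len (r * y))%N -> br x (r * y).
Proof.
move=> br_xy Rr; rewrite conjgC => lt_y_ry.
exact: bruhat_step br_xy (reflectionJ y Rr) lt_y_ry.
Qed.

Lemma bruhat_up_gen i y : (len y < len (s i * y))%N -> br y (s i * y).
Proof. exact: bruhat_lmul_refl (bruhat_refl s y) (gen_reflection i). Qed.

Lemma bruhat_down_gen i y : (len (s i * y) < len y)%N -> br (s i * y) y.
Proof. by move=> lt; have := @bruhat_up_gen i (s i * y); rewrite gen_mulK; apply. Qed.

Lemma bruhat_cox_len x y : br x y -> x = y \/ (len x < len y)%N.
Proof.
elim=> [|{}x {}y t _ [<- | lt_xy] _ lt_yt]; [by left | by right |].
by right; apply: ltn_trans lt_xy lt_yt.
Qed.

Lemma cox_len_lmul_gen_refl i z t : t \in reflections s ->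
  (len z < len (z * t))%N -> (len (s i * (z * t)) < len (z * t))%N ->
  s i * z = z * t \/ (len (s i * z) < len (s i * (z * t)))%N.
Proof.
move=> Rt lt_z_zt; set y := z * t; set r := t ^ z^-1.
have Rr : r \in reflections s by apply: reflectionJ.
have ry : r * y = z by rewrite /r /y mulgA -conjgCV -mulgA reflection_invol // mulg1.
clearbody r; have : refl_parity (s i * (s i * y)) r by rewrite gen_mulK -cox_len_reflM_ltE // ry.
rewrite refl_parityM refl_parity_gen.
case: eqP => [r_si _ | _ /= parity_r]; first by left; rewrite -ry r_si gen_mulK.
right; rewrite -cox_len_reflM_ltE ?reflectionJ // in parity_r.
by rewrite conjgE invg_gen -!mulgA gen_mulK ry in parity_r.
Qed.

Lemma bruhat_lift i x y : br x y ->
  ((len y < len (s i * y))%N -> br (s i * x) (s i * y)) /\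
  ((len (s i * y) < len y)%N -> br (s i * x) y).
Proof.
elim=> [{}x | {}x {}y t _ [IHup IHdown] Rt lt_y_yt].
  by split=> [_ | /bruhat_down_gen //]; apply: bruhat_refl.
have br_y_yt : br y (y * t) := bruhat_step (bruhat_refl s y) Rt lt_y_yt.
have [len_up | len_down] := cox_len_lmul_gen i y.
  have br_six_siy : br (s i * x) (s i * y) by apply: IHup; len_lia.
  have up_t : (len (s i * y) < len (s i * (y * t)))%N -> br (s i * x) (s i * (y * t)).
    by rewrite mulgA; apply: bruhat_step br_six_siy Rt.
  split=> [lt_yt | lt_siyt]; first by apply: up_t; len_lia.
  have [<- // | lt] := cox_len_lmul_gen_refl Rt lt_y_yt lt_siyt.
  exact: bruhat_trans (up_t lt) (bruhat_down_gen lt_siyt).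
have br_six_yt : br (s i * x) (y * t) by apply: bruhat_trans (IHdown _) br_y_yt; len_lia.
by split=> // /bruhat_up_gen; apply: bruhat_trans.
Qed.

Lemma bruhat_lift_down i x y : br x y -> (len (s i * y) < len y)%N ->
  br x (s i * y) \/ br (s i * x) (s i * y).
Proof.
elim=> [{}x _ | {}x {}y t br_xy IH Rt lt_y_yt lt_siyt]; first by right; apply: bruhat_refl.
have [len_up | len_down] := cox_len_lmul_gen i y.
  have [<- | lt] := cox_len_lmul_gen_refl Rt lt_y_yt lt_siyt; first by left; rewrite gen_mulK.
  have br_x_siy : br x (s i * y) by apply: bruhat_trans br_xy (bruhat_up_gen _); len_lia.
  left; apply: bruhat_trans br_x_siy _.
  by rewrite mulgA; apply: bruhat_step (bruhat_refl s _) Rt _; rewrite -mulgA.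
have si_step : br (s i * y) (s i * (y * t)).
  rewrite mulgA; apply: bruhat_step (bruhat_refl s _) Rt _; rewrite -mulgA.
  by have := cox_len_lmul_gen i (y * t); len_lia.
by case: (IH _) => [|br_y|br_y]; [len_lia | left | right]; apply: bruhat_trans br_y si_step.
Qed.

Variable J : {set I}.
Local Notation P := (parabolic s J).
Local Notation M := (min_reps s J).

Lemma min_repsP x v : x \in M -> v \in P -> (len x <= len (x * v))%N.
Proof. by rewrite inE => /forall_inP; apply. Qed.

Lemma gen_parabolic j : j \in J -> s j \in P.
Proof. by move=> Jj; rewrite mem_gen ?imset_f. Qed.

Lemma word_eval_parabolic a : all (mem J) a -> ev a \in P.
Proof.
elim: a => [|i a IHa] /=; first by rewrite word_eval_nil group1.
by case/andP => Ji Ja; rewrite word_eval_cons groupM ?IHa ?gen_parabolic.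
Qed.

Lemma cox_len_min_reps_mul x v : x \in M -> v \in P -> len (x * v) = (len x + len v)%N.
Proof.
move=> Mx /mem_gen_word [a]; elim/last_ind: a v => [|a j IHa] _ Ja <-.
  by rewrite word_eval_nil mulg1 cox_len1 addn0.
move: Ja; rewrite all_rcons => /andP [Jj Ja]; rewrite word_eval_rcons.
have {IHa}len_xv := IHa _ Ja erefl; set v := ev a in len_xv *.
have := cox_len_mul x (v * s j); have := cox_len_mulr_gen (x * v) j; rewrite -mulgA.
have [len_vj | len_vj] := cox_len_mulr_gen v j; last by len_lia.
suff : (len (x * v) < len (x * (v * s j)))%N by len_lia.
set r := s j ^ (x * v)^-1; have Rr : r \in reflections s by rewrite reflectionJ ?gen_reflection.
have r_x : r ^ x = s j ^ v^-1 by rewrite /r invMg conjgM conjgKV.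
rewrite mulgA (conjgCV (x * v)) -/r ltnNge leq_eqVlt (negbTE (cox_len_reflM_neq _ Rr)).
rewrite cox_len_reflM_ltE // refl_parityM r_x /=.
have Pv : v \in P := word_eval_parabolic Ja.
have parity_x : ~~ refl_parity x r.
  apply: contraL (min_repsP Mx (groupJ (gen_parabolic Jj) (groupVr Pv))).
  by move/cox_len_refl_parity_lt; rewrite conjgC r_x -ltnNge.
have parity_v : ~~ refl_parity v (s j ^ v^-1).
  by apply/negP => /cox_len_refl_parity_lt; rewrite -conjgCV; len_lia.
by rewrite (negbTE parity_x) (negbTE parity_v).
Qed.

Lemma min_reps_decomp g : exists x v, [/\ x \in M, v \in P & g = x * v].
Proof.
have P_g : g^-1 * g \in P by rewrite mulVg group1.
have [x P_x min_x] := @arg_minnP _ g (fun y => g^-1 * y \in P) (fun y => len y) P_g.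
exists x, (x^-1 * g); split; last by rewrite mulKVg.
- by rewrite inE; apply/forall_inP => v Pv; apply: min_x; rewrite mulgA groupM.
- by rewrite -groupV invMg invgK.
Qed.

Lemma min_reps_decomp_uniq x y v v' : x \in M -> y \in M -> v \in P -> v' \in P ->
  x * v = y * v' -> x = y /\ v = v'.
Proof.
move=> Mx My Pv Pv' xv_yv'.
have def_x : x = y * (v' * v^-1) by rewrite mulgA -xv_yv' mulgK.
have def_y : y = x * (v * v'^-1) by rewrite mulgA xv_yv' mulgK.
have := cox_len_min_reps_mul My (groupM Pv' (groupVr Pv)); rewrite -def_x.
have := cox_len_min_reps_mul Mx (groupM Pv (groupVr Pv')); rewrite -def_y.
move=> len_y len_x; have /cox_len_eq0/eqP : len (v' * v^-1) = 0%N by len_lia.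
by rewrite mulg_eq1 invgK => /eqP v'v; move: xv_yv'; rewrite v'v => /mulIg.
Qed.

Lemma min_reps_lmul_gen i x : x \in M ->
  s i * x \in M \/ exists2 k, s k \in P & s i * x = x * s k.
Proof.
move=> Mx; have [y [v0 [My Pv0 def_six]]] := min_reps_decomp (s i * x).
have len_six : len (s i * x) = (len y + len v0)%N by rewrite def_six cox_len_min_reps_mul.
have siy : s i * y = x * v0^-1 by rewrite -(mulgK v0 y) -def_six -mulgA gen_mulK.
have len_siy : len (s i * y) = (len x + len v0)%N.
  by rewrite siy cox_len_min_reps_mul ?groupV // cox_len_invg.
have := cox_len_lmul_gen i x; have := cox_len_lmul_gen i y.
case: (ltngtP (len v0) 1) => [len_v0 | | len_v0]; try len_lia.
  by left; rewrite def_six (cox_len_eq0 (_ : len v0 = 0%N)) ?mulg1 //; lia.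
have [k def_v0] := cox_len_eq1 len_v0; rewrite def_v0 in Pv0 siy len_six len_siy len_v0.
move=> len_y len_x; right; exists k => //.
have : refl_parity (x * s k) (s i).
  by rewrite -cox_len_reflM_ltE ?gen_reflection // -(invg_gen k) -siy gen_mulK; len_lia.
rewrite refl_parityM refl_parity_gen -cox_len_reflM_ltE ?gen_reflection //.
have -> : (len (s i * x) < len x)%N = false by len_lia.
by rewrite conjgC => /eqP ->.
Qed.

Lemma bruhat_min_reps_lift u w x v v' : w \in M ->
  len (u * w) = (len u + len w)%N -> x \in M -> v \in P -> u * w = x * v ->
  br v' v -> exists2 u', br u' u & u' * w = x * v'.
Proof.
move=> Mw; move len_u: (len u) => n.
elim: n u len_u x v v' => [|n IHn] u len_u x v v' len_uw Mx Pv uw_xv br_v'v.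
  move: uw_xv; rewrite (cox_len_eq0 len_u) mul1g -{1}(mulg1 w).
  case/min_reps_decomp_uniq => // <- v1; rewrite -v1 in br_v'v.
  exists 1; first exact: bruhat_refl.
  by case: (bruhat_cox_len br_v'v) => [-> | ]; rewrite ?cox_len1 ?mul1g ?mulg1.
have [i len_u1] := cox_len_left_descent len_u; set u1 := s i * u in len_u1.
have def_u : u = s i * u1 by rewrite gen_mulK.
have len_u1w : len (u1 * w) = (n + len w)%N.
  by have := cox_len_mul u1 w; have := cox_len_lmul_gen_le i (u1 * w); rewrite mulgA -def_u; len_lia.
have [x1 [v1 [Mx1 Pv1 u1w]]] := min_reps_decomp (u1 * w).
have IH := IHn u1 len_u1 x1 v1 _ len_u1w Mx1 Pv1 u1w.
have lift u1' : br u1' u1 -> br (s i * u1') u.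
  by move=> br_u1; rewrite def_u; apply: (bruhat_lift i br_u1).1; rewrite -def_u; len_lia.
have uw : u * w = s i * x1 * v1 by rewrite def_u -mulgA u1w mulgA.
have [Msix1 | [k Pk six1]] := min_reps_lmul_gen i Mx1.
  have [<- v1v] := min_reps_decomp_uniq Msix1 Mx Pv1 Pv (etrans (esym uw) uw_xv).
  rewrite -v1v in br_v'v; have [u1' br_u1 u1'w] := IH _ br_v'v.
  by exists (s i * u1'); [apply: lift | rewrite -mulgA u1'w mulgA].
have uw' : u * w = x1 * (s k * v1) by rewrite uw six1 -mulgA.
have [x1x def_v] := min_reps_decomp_uniq Mx1 Mx (groupM Pk Pv1) Pv (etrans (esym uw') uw_xv).
subst x.
have sk_v : s k * v = v1 by rewrite -def_v gen_mulK.
have lt_v : (len (s k * v) < len v)%N.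
  have := cox_len_min_reps_mul Mx1 Pv; have := cox_len_min_reps_mul Mx1 Pv1.
  by rewrite sk_v -uw_xv -u1w; len_lia.
have br_u1_u : br u1 u by rewrite def_u; apply: bruhat_up_gen; rewrite -def_u; len_lia.
case: (bruhat_lift_down br_v'v lt_v); rewrite sk_v => /IH [u1' br_u1 u1'w].
  by exists u1' => //; apply: bruhat_trans br_u1 br_u1_u.
exists (s i * u1'); first exact: lift.
by rewrite -mulgA u1'w mulgA six1 -mulgA gen_mulK.
Qed.

End CoxeterSystem.

Theorem lemma3p10 (gT : finGroupType) (I : finType) (s : I -> gT)
  (Hcox : coxeter_system s) (Hcryst : crystallographic s)
  (J : {set I}) (w u x v : gT) :
  w \in min_reps s J ->
  cox_len s (u * w) = (cox_len s u + cox_len s w)%N ->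
  x \in min_reps s J -> v \in parabolic s J ->
  u * w = x * v ->
  forall v' : gT, bruhat s v' v ->
  exists u' : gT, bruhat s u' u /\ u' * w = x * v'.
Proof.
case: Hcox => gen_s _ gen_sq presentation.
have gen_invol i : s i * s i = 1 by rewrite -(proj2 (gen_sq i)) expgS expg1.
move=> Mw len_uw Mx Pv uw_xv v' br_v'v.
have [u' br_u'u u'w] := bruhat_min_reps_lift gen_s gen_invol presentation Mw len_uw Mx Pv uw_xv br_v'v.
by exists u'.
Qed.
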